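(* Let $\beta$ be an ordered partition of $N$ and let $\zeta\in(\mathfrak t')^*_\beta$ be $\beta$-generic with $\zeta(c)\neq0$. Then (i) the map $W\to(\mathfrak t')^*$, $w\mapsto w(\zeta)$ (affine action) is injective; (ii) the map $X^\beta\to(\mathfrak t')^*/\bar W$, $x\mapsto\bar W\cdot x(\zeta)$, is injective. (Analogously, if $\zeta\in\bar{\mathfrak t}^*_\beta$ is $\beta$-generic, then $w\mapsto w(\zeta)$ is injective on $\bar W$.)
   Context: Fix an integer $N\ge2$. Let $\bar{\mathfrak t}=\bigoplus_{i=1}^N\mathbb C\epsilon_i^\vee$, $\mathfrak t'=\bar{\mathfrak t}\oplus\mathbb Cc$, $\epsilon_1,\dots,\epsilon_N\in\bar{\mathfrak t}^*$ the dual basis, and $(\mathfrak t')^*=\bar{\mathfrak t}^*\oplus\mathbb Cc^*$ with $\epsilon_i(c)=0$, $c^*(c)=1$, $c^*(\bar{\mathfrak t})=0$. Put $(\epsilon_i,\epsilon_j)=\delta_{ij}$ and for $\zeta\in(\mathfrak t')^*$, $\bar\alpha=\sum a_i\epsilon_i$, $(\zeta,\bar\alpha)=\sum_ia_i\zeta(\epsilon_i^\vee)$. $\bar R=\{\alpha_{ij}=\epsilon_i-\epsilon_j:i\ne j\}$, $\bar R_+=\{\alpha_{ij}:i<j\}$, $\alpha_i=\alpha_{i,i+1}$, $\bar\Pi=\{\alpha_1,\dots,\alpha_{N-1}\}$. With formal $\delta$, $R=\{\bar\alpha+k\delta:\bar\alpha\in\bar R,k\in\mathbb Z\}$, $R_+=\{\bar\alpha+k\delta:\bar\alpha\in\bar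 R_+,k\ge0\}\cup\{-\bar\alpha+k\delta:\bar\alpha\in\bar R_+,k>0\}$, $R_-=R\setminus R_+$; $(\zeta,\bar\alpha+k\delta)=(\zeta,\bar\alpha)+k\zeta(c)$. $\bar P=\bigoplus\mathbb Z\epsilon_i$, $\bar P_-=\{\eta\in\bar P:(\eta,\alpha)\le0\ \forall\alpha\in\bar R_+\}$, $\bar W=\mathfrak S_N$ permuting indices, $W=\bar W\ltimes\bar P$ (elements $wt_\eta$, $wt_\eta w^{-1}=t_{w(\eta)}$), acting on $R$ by $w(\bar\alpha+k\delta)=w(\bar\alpha)+k\delta$, $t_\eta(\bar\alpha+k\delta)=\bar\alpha+(k-(\eta,\bar\alpha))\delta$, and on $(\mathfrak t')^*$ by the affine action: $w$ permutes the $\epsilon_i$ and fixes $c^*$, $t_\eta(\zeta)=\zeta+\zeta(c)\eta$. $l(w)=\#(R_+\cap w^{-1}(R_-))$. An ordered partition $\beta$ of $N$ gives blocks of consecutive indices of sizes $\beta_1,\dots,\beta_r$; $\bar R_\beta=\{\alpha_{ij}:i,j\text{ in the same block}\}$, $\bar R_{\beta,+}=\bar R_\beta\cap\bar R_+$, $\bar\Pi_\beta=\bar\Pi\cap\bar R_\beta$, $\bar W_\beta=\langle s_\alpha:\alpha\in\bar\Pi_\beta\rangle$, $W^\beta=\{w\in W:l(wu)\ge l(w)\ \forall u\in\bar W_\beta\}$, $\bar W^\beta=W^\beta\cap\bar W$. $(\mathfrak t')^*_\beta=\{\zeta\in(\mathfrak t')^*:(\zeta,\alpha)=-1\ \forall\alpha\in\bar\Pi_\beta\}$,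 $\bar{\mathfrak t}^*_\beta$ analogously in $\bar{\mathfrak t}^*$. $\zeta\in(\mathfrak t')^*_\beta$ (resp. $\bar{\mathfrak t}^*_\beta$) is $\beta$-generic if $(\zeta,\alpha)\notin\{1,0,-1\}$ for all $\alpha\in R_+\setminus\bar R_{\beta,+}$ (resp. $\bar R_+\setminus\bar R_{\beta,+}$). For $w\in\bar W^\beta$, $\eta_w\in\bar P_-$ is defined by $(\eta_w,\epsilon_1)=0$ and $(\eta_w,\alpha_i)=-1$ if $\alpha_i\in w(\bar R_+\setminus\bar R_{\beta,+})$, $0$ otherwise; $\bar P_-(w)=\{\eta+\eta_w:\eta\in\bar P_-\}$; $X^\beta=\{t_\eta w:w\in\bar W^\beta,\eta\in\bar P_-(w)\}$. *)

From HB Require Import structures.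
From mathcomp Require Import all_boot all_order all_algebra all_fingroup.
From mathcomp Require complex.
From mathcomp Require Import Rstruct.
Set Implicit Arguments.
Unset Strict Implicit.
Unset Printing Implicit Defensive.
Import Order.TTheory GRing.Theory Num.Theory.

Local Open Scope ring_scope.

Module CCdef.
Import complex.
Definition CC : numClosedFieldType := complex.complex Rdefinitions.R.
End CCdef.
Definition CC : numClosedFieldType := CCdef.CC.

(* Weights.  zeta in (t')^* is encoded by the pair (z, kappa) where
   z i = zeta(eps_i^vee) = (zeta, eps_i)  and  kappa = zeta(c).
   Elements of bar t^* are encoded by z alone (zeta(c) = 0 there).
   Elements of bar P = (+)_i Z eps_i are encoded by their coordinates. *)
Definition tdual (N : nat) : Type := ({ffun 'I_N -> CC} * CC)%type.
Definition Pbar (N : nat) : Type := {ffun 'I_N -> int}.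

(* bar W = S_N acting by w(eps_i) = eps_(w i).  Hence the coefficient of
   eps_j in w(zeta) is the coefficient of eps_(w^-1 j) in zeta.        *)
Definition pactb (N : nat) (w : {perm 'I_N}) (z : {ffun 'I_N -> CC})
  : {ffun 'I_N -> CC} := [ffun j => z ((w^-1)%g j)].
Definition pact (N : nat) (w : {perm 'I_N}) (z : tdual N) : tdual N :=
  (pactb w z.1, z.2).

Definition tact (N : nat) (eta : Pbar N) (z : tdual N) : tdual N :=
  ([ffun i => z.1 i + z.2 * (eta i)%:~R], z.2).

(* An element of W = bar W |x bar P is written uniquely as w t_eta;
   we encode it by the pair (w, eta). *)
Definition Wel (N : nat) : Type := ({perm 'I_N} * Pbar N)%type.
Definition Wact (N : nat) (x : Wel N) (z : tdual N) : tdual N :=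
  pact x.1 (tact x.2 z).

(* Action of the element t_eta w of W (used for X^beta). *)
Definition Xact (N : nat) (w : {perm 'I_N}) (eta : Pbar N) (z : tdual N)
  : tdual N := tact eta (pact w z).

Definition ordered_partition (N : nat) (beta : seq nat) : Prop :=
  all (fun b : nat => (0 < b)%N) beta /\ sumn beta = N.

(* i lies in the k-th block (0-based) of beta. *)
Definition in_block (beta : seq nat) (k i : nat) : bool :=
  (k < size beta)%N && (sumn (take k beta) <= i < sumn (take k.+1 beta))%N.

Definition same_block (beta : seq nat) (i j : nat) : bool :=
  [exists k : 'I_(size beta), in_block beta k i && in_block beta k j].

(* Roots.  The affine root alpha_ij + k delta (i <> j) is encoded by (i,j,k). *)
Definition posroot (N : nat) (i j : 'I_N) (k : int) : bool :=
  (i != j) && ((((i < j)%N) && (0 <= k)) || (((j < i)%N) && (0 < k))).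

Definition in_Rbeta_pos (beta : seq nat) (N : nat) (i j : 'I_N) (k : int)
  : bool := (k == 0) && (i < j)%N && same_block beta i j.

Definition pair_root (N : nat) (z : tdual N) (i j : 'I_N) (k : int) : CC :=
  z.1 i - z.1 j + k%:~R * z.2.

Definition in_tdual_beta (beta : seq nat) (N : nat) (z : tdual N) : Prop :=
  forall i j : 'I_N, val j = (val i).+1 -> same_block beta i j ->
    z.1 i - z.1 j = -1.

Definition in_tbar_beta (beta : seq nat) (N : nat) (z : {ffun 'I_N -> CC})
  : Prop :=
  forall i j : 'I_N, val j = (val i).+1 -> same_block beta i j ->
    z i - z j = -1.

Definition generic (beta : seq nat) (N : nat) (z : tdual N) : Prop :=
  forall (i j : 'I_N) (k : int), posroot i j k -> ~~ in_Rbeta_pos beta i j k ->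
    pair_root z i j k \notin [:: 1; 0; -1].

Definition generic_bar (beta : seq nat) (N : nat) (z : {ffun 'I_N -> CC})
  : Prop :=
  forall i j : 'I_N, (i < j)%N -> ~~ same_block beta i j ->
    z i - z j \notin [:: 1; 0; -1].

(* Length on bar W:  l(w) = #(R_+ \cap w^-1(R_-)).  For w in bar W,
   w(alpha_ij + k delta) = alpha_(w i, w j) + k delta, so a root with k <> 0
   keeps its sign; only k = 0 contributes, giving the finite count below. *)
Definition lenW (N : nat) (w : {perm 'I_N}) : nat :=
  #|[set p : 'I_N * 'I_N | posroot p.1 p.2 0 && ~~ posroot (w p.1) (w p.2) 0]|.

Definition Pi_beta_refl (beta : seq nat) (N : nat) : {set {perm 'I_N}} :=
  [set s | [exists i : 'I_N, exists j : 'I_N,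
             [&& val j == (val i).+1, same_block beta i j & s == tperm i j]]].

Definition Wbar_beta (beta : seq nat) (N : nat) : {set {perm 'I_N}} :=
  <<Pi_beta_refl beta N>>%g.

(* bar W^beta = { w in bar W : l(wu) >= l(w) for all u in bar W_beta }.
   The product wu (first u, then w) is the mathcomp permutation (u * w)%g. *)
Definition in_WbarBeta (beta : seq nat) (N : nat) (w : {perm 'I_N}) : Prop :=
  forall u, u \in Wbar_beta beta N -> (lenW w <= lenW (u * w)%g)%N.

Definition in_Pminus (N : nat) (eta : Pbar N) : Prop :=
  forall i j : 'I_N, (i < j)%N -> eta i - eta j <= 0.

(* e is eta_w: (e, eps_1) = 0 and (e, alpha_i) = -1 if alpha_i in
   w(bar R_+ \ bar R_(beta,+)), 0 otherwise.  alpha_i = alpha_(i,i+1) lies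
   in w(S) iff w^-1(alpha_(i,i+1)) = alpha_(w^-1 i, w^-1 (i+1)) lies in S. *)
Definition is_eta_w (beta : seq nat) (N : nat) (w : {perm 'I_N}) (e : Pbar N)
  : Prop :=
  (forall i : 'I_N, val i = 0%N -> e i = 0) /\
  (forall i j : 'I_N, val j = (val i).+1 ->
     e i - e j =
       (if ((w^-1)%g i < (w^-1)%g j)%N && ~~ same_block beta ((w^-1)%g i) ((w^-1)%g j)
        then -1 else 0)).

Definition in_Pminus_w (beta : seq nat) (N : nat) (w : {perm 'I_N})
  (eta : Pbar N) : Prop :=
  exists eta0 ew : Pbar N,
    [/\ in_Pminus eta0, is_eta_w beta w ew & eta = eta0 + ew].

Definition in_Xbeta (beta : seq nat) (N : nat) (w : {perm 'I_N}) (eta : Pbar N)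
  : Prop := in_WbarBeta beta w /\ in_Pminus_w beta w eta.

(* The coordinates of w t_eta (zeta) are the numbers zeta_a + m zeta(c) with
   (a, m) = (w^-1 j, eta (w^-1 j)).  Inside a block, consecutive coordinates of zeta differ
   by -1, so zeta_a - zeta_b is a nonzero integer there; genericity excludes
   zeta_a - zeta_b + k zeta(c) = 0 for all other affine roots.  Hence, as zeta(c) <> 0,
   (a, m) |-> zeta_a + m zeta(c) is injective, which gives (i) and the finite statement.
   For (ii), t_eta w in X^beta is recovered from the set {(eta i, w^-1 i)}: minimality of w
   in w bar W_beta and eta in bar P_-(w) make this sequence strictly increasing for the
   lexicographic order whose ties are broken by "increasing inside a block, decreasing
   across blocks", and a strictly sorted sequence is determined by its elements. *)
From mathcomp Require Import all_boot all_order all_algebra all_fingroup.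
From mathcomp Require Import zify ring.
Import Order.TTheory GRing.Theory Num.Theory.
Local Open Scope ring_scope.
Set Implicit Arguments.
Unset Strict Implicit.

Lemma path_map_iota (T : Type) (r : rel T) (f : nat -> T) m k :
  (forall i, (m <= i)%N -> (i < m + k)%N -> r (f i) (f i.+1)) ->
  path r (f m) (map f (iota m.+1 k)).
Proof.
elim: k m => [//|k IH] m h /=.
rewrite h //; last lia.
by apply: IH => i h1 h2; apply: h; lia.
Qed.

Section Blocks.
Variable beta : seq nat.

Lemma leq_sumn_take k l : (k <= l)%N -> (sumn (take k beta) <= sumn (take l beta))%N.
Proof. by move=> kl; rewrite -(subnKC kl) takeD sumn_cat leq_addr. Qed.

Lemma in_block_uniq k l x : in_block beta k x -> in_block beta l x -> k = l.
Proof.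
rewrite /in_block => /andP[_ /andP[h1 h2]] /andP[_ /andP[h3 h4]].
by case: (ltngtP k l) => // kl; have := leq_sumn_take kl; lia.
Qed.

Lemma same_block_sym x y : same_block beta x y = same_block beta y x.
Proof. by apply/existsP/existsP => -[k /andP[a b]]; exists k; rewrite a b. Qed.

Lemma same_block_trans x y z :
  same_block beta x y -> same_block beta y z -> same_block beta x z.
Proof.
move=> /existsP[k /andP[a b]] /existsP[l /andP[c d]].
have kl : k = l by apply: ord_inj; apply: in_block_uniq b c.
by subst l; apply/existsP; exists k; rewrite a d.
Qed.

Lemma same_block_between a b c d : same_block beta a b ->
  (a <= c)%N -> (c <= d)%N -> (d <= b)%N -> same_block beta c d.
Proof.
move=> /existsP[k /andP[]]; rewrite /in_block.
move=> /andP[ks /andP[h1 h2]] /andP[_ /andP[h3 h4]] ac cd db.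
by apply/existsP; exists k; rewrite /in_block ks /=; apply/andP; split; apply/andP; split; lia.
Qed.

Definition block_lt (x y : nat) : bool :=
  if same_block beta x y then (x < y)%N else (y < x)%N.

Lemma block_lt_irr : irreflexive block_lt.
Proof. by move=> x; rewrite /block_lt ltnn; case: ifP. Qed.

Lemma block_lt_trans : transitive block_lt.
Proof.
move=> y x z; rewrite /block_lt.
case sxy: (same_block beta x y) => hxy; case syz: (same_block beta y z) => hyz.
- by rewrite (same_block_trans sxy syz); apply: ltn_trans hxy hyz.
- case sxz: (same_block beta x z).
    by rewrite same_block_sym in sxy; rewrite (same_block_trans sxy sxz) in syz.
  rewrite ltnNge; apply/negP => xz.
  have : same_block beta z y by apply: (same_block_between sxy) => //; lia.
  by rewrite same_block_sym syz.
- case sxz: (same_block beta x z).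
    by rewrite same_block_sym in syz; rewrite (same_block_trans sxz syz) in sxy.
  rewrite ltnNge; apply/negP => xz.
  have : same_block beta y x by apply: (same_block_between syz) => //; lia.
  by rewrite same_block_sym sxy.
- case sxz: (same_block beta x z); last by apply: ltn_trans hyz hxy.
  rewrite same_block_sym in sxz.
  have : same_block beta z y by apply: (same_block_between sxz) => //; lia.
  by rewrite same_block_sym syz.
Qed.

End Blocks.

Section Weights.
Variables (beta : seq nat) (n : nat).
Local Notation I := 'I_n.+1.

Lemma in_tbar_beta_diff (z : {ffun I -> CC}) : in_tbar_beta beta z ->
  forall k a, (a + k < n.+1)%N -> same_block beta a (a + k) ->
  z (inord a) - z (inord (a + k)) = - k%:R.
Proof.
move=> hz; elim=> [|k IH] a ltk sb; first by rewrite addn0 subrr oppr0.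
have -> : z (inord a) - z (inord (a + k.+1)) =
  (z (inord a) - z (inord (a + k))) + (z (inord (a + k)) - z (inord (a + k.+1))) by ring.
rewrite IH; [|lia|by apply: (same_block_between sb); lia].
rewrite (hz (inord (a + k)) (inord (a + k.+1))).
- by rewrite -addn1 natrD opprD.
- by rewrite /= !inordK; lia.
- by rewrite !inordK; [apply: (same_block_between sb)|..]; lia.
Qed.

Lemma in_tbar_beta_diff_neq0 (z : {ffun I -> CC}) : in_tbar_beta beta z ->
  forall a b : I, (a < b)%N -> same_block beta a b -> z a - z b != 0.
Proof.
move=> hz a b ab sb; have hb := ltn_ord b.
have eb : b = inord (a + (b - a)) by apply: val_inj; rewrite /= inordK; lia.
have sb' : same_block beta a (a + (b - a)) by rewrite subnKC // ltnW.
rewrite eb -[a in z a](inord_val a) (in_tbar_beta_diff hz _ sb'); last lia.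
by rewrite oppr_eq0 pnatr_eq0; lia.
Qed.

Lemma tbar_coord_inj (z : {ffun I -> CC}) :
  in_tbar_beta beta z -> generic_bar beta z -> injective z.
Proof.
move=> hz hg.
suff lt_neq (a b : I) : (a < b)%N -> z a <> z b.
  move=> a b e; case: (ltngtP a b) => [ab|ab|/val_inj //].
  - by case: (lt_neq _ _ ab e).
  - by case: (lt_neq _ _ ab (esym e)).
move=> ab e; case sb: (same_block beta a b).
  by move: (in_tbar_beta_diff_neq0 hz ab sb); rewrite e subrr eqxx.
by move: (hg a b ab (negbT sb)); rewrite e subrr !inE eqxx orbT.
Qed.

Lemma tdual_coord_inj (z : tdual n.+1) :
  in_tdual_beta beta z -> generic beta z -> z.2 != 0 ->
  forall (a b : I) (m m' : int),
  z.1 a + z.2 * m%:~R = z.1 b + z.2 * m'%:~R -> a = b /\ m = m'.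
Proof.
move=> hz hg k0.
have root_neq0 (x : CC) : x = 0 -> x \notin [:: 1; 0; -1] -> False.
  by move=> ->; rewrite !inE eqxx orbT.
suff lt_neq (a b : I) (m m' : int) : (a < b)%N ->
    z.1 a + z.2 * m%:~R = z.1 b + z.2 * m'%:~R -> False.
  move=> a b m m' e.
  have ab : a = b.
    case: (ltngtP a b) => [ab|ab|/val_inj //].
    - by case: (lt_neq _ _ _ _ ab e).
    - by case: (lt_neq _ _ _ _ ab (esym e)).
  by subst b; split=> //; move/addrI: e => /(mulfI k0); apply: intr_inj.
move=> ab e.
have a_neq_b : a != b by apply: contraTneq ab => ->; rewrite ltnn.
have p0 : pair_root z a b (m - m') = 0.
  rewrite /pair_root intrB.
  have -> : z.1 a = z.1 b + z.2 * m'%:~R - z.2 * m%:~R by rewrite -e; ring.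
  ring.
have [hk|hk] := lerP 0 (m - m').
  case r: (in_Rbeta_pos beta a b (m - m')).
    move: r p0; rewrite /in_Rbeta_pos /pair_root => /andP[/andP[/eqP -> _] sb].
    rewrite mul0r addr0 => /eqP; apply/negP.
    exact: (in_tbar_beta_diff_neq0 (hz : in_tbar_beta beta z.1) ab sb).
  apply: (root_neq0 _ p0); apply: hg; last by rewrite r.
  by rewrite /posroot a_neq_b ab hk.
have p1 : pair_root z b a (- (m - m')) = 0.
  by rewrite -oppr0 -p0 /pair_root intrN mulNr; ring.
apply: (root_neq0 _ p1); apply: hg.
  by rewrite /posroot eq_sym a_neq_b ab oppr_gt0 hk orbT.
by rewrite /in_Rbeta_pos oppr_eq0 (negbTE (ltr0_neq0 hk)).
Qed.

End Weights.

Section MinimalCosetRepresentatives.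
Variables (beta : seq nat) (n : nat).
Local Notation I := 'I_n.+1.

Lemma posroot_0 (i j : I) : posroot i j 0 = (i < j)%N.
Proof.
rewrite /posroot lexx ltxx andbT andbF orbF.
apply/idP/idP => [/andP[]//|h]; rewrite h andbT.
by apply: contraTneq h => ->; rewrite ltnn.
Qed.

Lemma tperm_succ_lt (c d : I) : val d = (val c).+1 ->
  forall x y : I, (x < y)%N -> (x, y) != (c, d) -> (tperm c d x < tperm c d y)%N.
Proof.
move=> /= hcd x y xy ne.
have val_neq (a b : I) : a <> b -> nat_of_ord a <> nat_of_ord b by move=> h /val_inj.
case: (tpermP c d x) => [ex|ex|hx1 hx2]; case: (tpermP c d y) => [ey|ey|hy1 hy2];
  try subst x; try subst y;
  repeat match goal with H : ?a <> ?b |- _ => move/val_neq in H end; try lia.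
all: by rewrite eqxx in ne.
Qed.

(* The descent (c, d) of w is the only inversion lost; the others are transported by tperm c d. *)
Lemma lenW_tperm_descent (w : {perm I}) (c d : I) : val d = (val c).+1 ->
  (w d < w c)%N -> (lenW (tperm c d * w)%g < lenW w)%N.
Proof.
move=> hcd hw; rewrite /lenW; set A := [set p | _]; set B := [set p | _].
have cdB : (c, d) \in B by rewrite inE /= !posroot_0 hcd ltnSn /= -leqNgt ltnW.
rewrite (cardsD1 (c, d) B) cdB add1n ltnS.
pose g (p : I * I) := (tperm c d p.1, tperm c d p.2).
have g_inj : injective g.
  by move=> [x1 x2] [y1 y2] [/perm_inj e1 /perm_inj e2] /=; rewrite e1 e2.
rewrite -(card_imset A g_inj); apply: subset_leq_card; apply/subsetP => q.
case/imsetP => -[p1 p2]; rewrite !inE /= !posroot_0 !permM => /andP[lt12 nw] ->.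
have pne : (p1, p2) != (c, d).
  by apply/eqP => -[e1 e2]; move: nw; rewrite e1 e2 tpermL tpermR hw.
rewrite /g /= (tperm_succ_lt hcd lt12 pne) nw /= ?andbT.
apply/eqP => -[e1 e2].
have p1d : p1 = d by rewrite -(tpermK c d p1) e1 tpermL.
have p2c : p2 = c by rewrite -(tpermK c d p2) e2 tpermR.
by move: lt12 hcd; rewrite p1d p2c /=; lia.
Qed.

Lemma WbarBeta_tperm_succ (c : nat) : (c.+1 < n.+1)%N ->
  same_block beta c c.+1 -> tperm (inord c : I) (inord c.+1) \in Wbar_beta beta n.+1.
Proof.
move=> hc sb; apply: mem_gen; rewrite inE; apply/existsP; exists (inord c).
apply/existsP; exists (inord c.+1); rewrite /= !inordK ?eqxx ?sb //; lia.
Qed.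

Lemma WbarBeta_mono_in_block (w : {perm I}) : in_WbarBeta beta w ->
  forall a b : I, (a <= b)%N -> same_block beta a b -> (w a <= w b)%N.
Proof.
move=> hW a b ab sb; have hb := ltn_ord b.
have no_descent c : (a <= c)%N -> (c < b)%N ->
    (w (inord c) <= w (inord c.+1))%N.
  move=> ac cb; rewrite leqNgt; apply/negP => desc.
  have c_succ : val (inord c.+1 : I) = (val (inord c : I)).+1 by rewrite /= !inordK; lia.
  have sb_c : same_block beta c c.+1 by apply: (same_block_between sb); lia.
  have hc : (c.+1 < n.+1)%N by lia.
  have := hW _ (WbarBeta_tperm_succ hc sb_c).
  by rewrite leqNgt (lenW_tperm_descent c_succ desc).
have chain k : (a + k <= b)%N -> (w a <= w (inord (a + k)))%N.
  elim: k => [|k IH] hk; first by rewrite addn0 inord_val.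
  by apply: (leq_trans (IH _)); [lia | rewrite addnS; apply: no_descent; lia].
by have := chain (b - a)%N; rewrite subnKC // inord_val; apply.
Qed.

End MinimalCosetRepresentatives.

Section Xbeta.
Variables (beta : seq nat) (n : nat).
Local Notation I := 'I_n.+1.

Definition lex_block_lt (p q : int * I) : bool :=
  (p.1 < q.1) || ((p.1 == q.1) && block_lt beta (val p.2) (val q.2)).

Lemma lex_block_lt_irr : irreflexive lex_block_lt.
Proof. by move=> [a x]; rewrite /lex_block_lt /= ltxx block_lt_irr andbF. Qed.

Lemma lex_block_lt_trans : transitive lex_block_lt.
Proof.
move=> [y1 y2] [x1 x2] [z1 z2]; rewrite /lex_block_lt /=.
case/orP=> [h1|/andP[/eqP e1 p1]]; case/orP=> [h2|/andP[/eqP e2 p2]].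
- by rewrite (lt_trans h1 h2).
- by rewrite -e2 h1.
- by rewrite e1 h2.
- by rewrite e1 e2 eqxx (block_lt_trans p1 p2) orbT.
Qed.

Lemma Xbeta_succ_lt (w : {perm I}) (eta : Pbar n.+1) : in_Xbeta beta w eta ->
  forall i j : I, val j = (val i).+1 ->
  lex_block_lt (eta i, (w^-1)%g i) (eta j, (w^-1)%g j).
Proof.
move=> [hW [e0 [ew [hP [_ hew] ->]]]] i j hij.
have ij : (i < j)%N by rewrite hij.
have := hew i j hij; have := hP i j ij; rewrite /lex_block_lt /= !ffunE.
set si := (w^-1)%g i; set sj := (w^-1)%g j.
have sij : si != sj by apply: contraTneq ij => /perm_inj ->; rewrite ltnn.
set a := e0 i; set a' := e0 j; set b := ew i; set b' := ew j.
case: ifP => [_ h1 h2|c h1 h2]; first by apply/orP; left; lia.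
have [lt|eq] : (a + b < a' + b') \/ (a + b = a' + b') by lia.
  by rewrite lt.
rewrite eq ltxx eqxx /= /block_lt.
case sb: (same_block beta si sj).
  rewrite ltnNge; apply/negP => le.
  have := WbarBeta_mono_in_block hW le; rewrite same_block_sym sb !permKV.
  by move=> /(_ isT); rewrite leqNgt ij.
move: c; rewrite sb andbT => /negbT; rewrite -leqNgt leq_eqVlt.
by case/orP=> [/eqP/val_inj e|//]; rewrite e eqxx in sij.
Qed.

Lemma Xbeta_sorted (w : {perm I}) (eta : Pbar n.+1) : in_Xbeta beta w eta ->
  sorted lex_block_lt [seq (eta i, (w^-1)%g i) | i <- enum I].
Proof.
move=> hX.
have -> : [seq (eta i, (w^-1)%g i) | i <- enum I] =
    [seq (eta (inord k), (w^-1)%g (inord k)) | k <- iota 0 n.+1].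
  by rewrite -val_enum_ord -map_comp; apply: eq_map => i /=; rewrite inord_val.
apply: path_map_iota => i _ h.
by apply: Xbeta_succ_lt => //; rewrite /= !inordK //; lia.
Qed.

End Xbeta.

Section Injectivity.
Variables (beta : seq nat) (n : nat) (zeta : tdual n.+1).
Hypotheses (zeta_beta : in_tdual_beta beta zeta) (zeta_generic : generic beta zeta)
  (zeta_c : zeta.2 != 0).
Local Notation I := 'I_n.+1.

Lemma Wact_inj : injective (fun x : Wel n.+1 => Wact x zeta).
Proof.
move=> [w eta] [w' eta'] /(congr1 fst) /= E.
have coord j : (w^-1)%g j = (w'^-1)%g j /\ eta ((w^-1)%g j) = eta' ((w'^-1)%g j).
  have := congr1 (fun f : {ffun I -> CC} => f j) E; rewrite /= !ffunE.
  exact: tdual_coord_inj zeta_beta zeta_generic zeta_c _ _ _ _.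
have ww' : w = w' by apply: invg_inj; apply/permP => j; apply: (coord j).1.
by subst w'; congr pair; apply/ffunP => k; have := (coord (w k)).2; rewrite permK.
Qed.

Lemma Xact_orbit_inj (w w' : {perm I}) (eta eta' : Pbar n.+1) :
  in_Xbeta beta w eta -> in_Xbeta beta w' eta' ->
  (exists u : {perm I}, pact u (Xact w eta zeta) = Xact w' eta' zeta) ->
  w = w' /\ eta = eta'.
Proof.
move=> hX hX' [u E].
have coord j : (w^-1)%g ((u^-1)%g j) = (w'^-1)%g j /\ eta ((u^-1)%g j) = eta' j.
  have := congr1 (fun f : tdual n.+1 => f.1 j) E; rewrite /= !ffunE.
  exact: tdual_coord_inj zeta_beta zeta_generic zeta_c _ _ _ _.
have same_elems : [seq (eta i, (w^-1)%g i) | i <- enum I] =i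
                  [seq (eta' i, (w'^-1)%g i) | i <- enum I].
  move=> x; apply/mapP/mapP => -[i _ ->].
    by exists (u i); rewrite ?mem_enum //; have [<- <-] := coord (u i); rewrite permK.
  by exists ((u^-1)%g i); rewrite ?mem_enum //; have [<- <-] := coord i.
have := irr_sorted_eq (@lex_block_lt_trans beta n) (@lex_block_lt_irr beta n)
  (Xbeta_sorted hX) (Xbeta_sorted hX') same_elems.
move/eq_in_map => same_pairs.
have pair_eq i : eta i = eta' i /\ (w^-1)%g i = (w'^-1)%g i.
  by have := same_pairs i; rewrite mem_enum => /(_ isT) [-> ->].
split; last by apply/ffunP => j; apply: (pair_eq j).1.
by apply: invg_inj; apply/permP => j; apply: (pair_eq j).2.
Qed.

End Injectivity.

Lemma pactb_inj (beta : seq nat) (n : nat) (zb : {ffun 'I_n.+1 -> CC}) :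
  in_tbar_beta beta zb -> generic_bar beta zb -> injective (fun w : {perm 'I_n.+1} => pactb w zb).
Proof.
move=> hz hg w w' E; apply: invg_inj; apply/permP => j.
have := congr1 (fun f : {ffun 'I_n.+1 -> CC} => f j) E; rewrite /pactb !ffunE.
by move/(tbar_coord_inj hz hg).
Qed.

Theorem proposition2p21 (N : nat) (hN : (2 <= N)%N) (beta : seq nat)
  (hbeta : ordered_partition N beta) :
  (forall zeta : tdual N,
     in_tdual_beta beta zeta -> generic beta zeta -> zeta.2 != 0 ->
     (* (i) *)
     (forall x y : Wel N, Wact x zeta = Wact y zeta -> x = y) /\
     (* (ii) *)
     (forall (w w' : {perm 'I_N}) (eta eta' : Pbar N),
        in_Xbeta beta w eta -> in_Xbeta beta w' eta' ->
        (exists u : {perm 'I_N}, pact u (Xact w eta zeta) = Xact w' eta' zeta) ->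
        w = w' /\ eta = eta')) /\
  (forall zb : {ffun 'I_N -> CC},
     in_tbar_beta beta zb -> generic_bar beta zb ->
     forall w w' : {perm 'I_N}, pactb w zb = pactb w' zb -> w = w').
Proof.
case: N hN hbeta => [//|n] _ _.
split; last exact: pactb_inj.
move=> zeta zeta_beta zeta_generic zeta_c.
split; [exact: Wact_inj zeta_beta zeta_generic zeta_c |].
exact: Xact_orbit_inj zeta_beta zeta_generic zeta_c.
Qed.
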